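(* Let $\mathcal f:S\to T$ be a simulation with cut-off $\Delta$ and shift $\Gamma$. Then $\mathrm{Im}(H_T)_{<\Delta}=\mathrm{Im}(H_S-\Gamma)_{<\Delta}$, where for a real-valued function $H$, $\mathrm{Im}(H)_{<\Delta}=\{\xi\in\mathrm{Im}(H):\xi<\Delta\}$.
   Context: A spin system $S=(q_S,V_S,E_S,J_S)$: integer $q_S\ge2$, finite set $V_S$, hyperedges $E_S\subseteq\mathcal P(V_S)$ covering $V_S$, $J_S(e):[q_S]^e\to\mathbb R_{\ge0}$. $\mathcal C_S=[q_S]^{V_S}$, $H_S(\vec s)=\sum_eJ_S(e)(\vec s|_e)$. A simulation $\mathcal f:S\to T$ consists of a cut-off $\Delta>0$, shift $\Gamma\in\mathbb R$, degeneracy $d\in\mathbb N$, $P:V_T\to V_S^k$ (components $P^{(i)}$), $\mathrm{dec}:[q_S]^k\to[q_T]$, and $\mathrm{enc}=(\mathrm{enc}_i:[q_T]\to[q_S]^k)_{i=1,\dots,m}$, satisfying: (1) $P^{(i)}(v)=P^{(j)}(w)\Rightarrow i=j,\ v=w$; (2) $\mathrm{dec}\circ\mathrm{enc}_i=\mathrm{id}$; (3) $\mathrm{enc}_i(t)=\mathrm{enc}_j(t)$ for some $t$ implies $i=j$; (4) with $\mathrm{sim}_i(\vec t)=\{\vec s\in\mathcal C_S:\vec s\circ P=\mathrm{enc}_i\circ\vec t,\ H_S(\vec s)-\Gamma<\Delta\}$ (where $(\vec s\circ P)(v)=(\vec s(P^{(1)}(v)),\dots,\vec s(P^{(k)}(v)))$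 and $(\mathrm{enc}_i\circ\vec t)(v)=\mathrm{enc}_i(\vec t(v))$), $|\mathrm{sim}_i(\vec t)|=d$ whenever $H_T(\vec t)<\Delta$; (5) $H_S(\vec s)-\Gamma=H_T(\vec t)$ for $\vec s\in\bigcup_i\mathrm{sim}_i(\vec t)$, and $H_S(\vec s)-\Gamma\ge\Delta$ for every $\vec s$ in no $\mathrm{sim}_i(\vec t)$. *)

From HB Require Import structures.
From mathcomp Require Import all_boot all_order all_algebra.
Set Implicit Arguments. Unset Strict Implicit. Unset Printing Implicit Defensive.
Import Order.TTheory GRing.Theory Num.Theory.
Local Open Scope ring_scope.

(* A spin system S = (q, V, E, J) with real-valued (R : realFieldType) energies.
   Spin values [q] are represented by 'I_q = {0, ..., q-1}. *)
Record spin_system (R : realFieldType) := SpinSystem {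
  sq : nat;
  sq_ge2 : (2 <= sq)%N;
  sV : finType;
  sE : {set {set sV}};
  sE_cover : forall v : sV, exists2 e, e \in sE & v \in e;
  sJ : forall e : {set sV}, {ffun {x : sV | x \in e} -> 'I_sq} -> R;
  sJ_ge0 : forall (e : {set sV}) (c : {ffun {x : sV | x \in e} -> 'I_sq}), e \in sE -> 0 <= @sJ e c
}.
Arguments sJ {R} s e c.

Definition config R (S : spin_system R) := {ffun sV S -> 'I_(sq S)}.

Definition restr R (S : spin_system R) (e : {set sV S}) (s : config S)
  : {ffun {x : sV S | x \in e} -> 'I_(sq S)} :=
  [ffun x => s (val x)].

Definition ham R (S : spin_system R) (s : config S) : R :=
  \sum_(e in sE S) sJ S e (restr e s).

Definition Im_lt (R : realFieldType) (C : finType) (H : C -> R) (Delta : R) : pred R :=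
  fun xi => [exists c, H c == xi] && (xi < Delta).

Definition compP R (S : spin_system R) (VT : finType) (k : nat)
  (P : VT -> {ffun 'I_k -> sV S}) (s : config S) : VT -> {ffun 'I_k -> 'I_(sq S)} :=
  fun v => [ffun j => s (P v j)].

Definition simset R (S T : spin_system R) (k : nat)
  (P : sV T -> {ffun 'I_k -> sV S}) (enci : 'I_(sq T) -> {ffun 'I_k -> 'I_(sq S)})
  (Delta Gamma : R) (t : config T) : {set config S} :=
  [set s : config S | [forall v, compP P s v == enci (t v)] && (ham s - Gamma < Delta)].

Record simulation R (S T : spin_system R) := Simulation {
  Delta : R;
  Delta_gt0 : 0 < Delta;
  Gamma : R;
  deg : nat;
  deg_gt0 : (0 < deg)%N;
  sk : nat;
  sm : nat;
  sm_gt0 : (0 < sm)%N;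
  sP : sV T -> {ffun 'I_sk -> sV S};
  sdec : {ffun 'I_sk -> 'I_(sq S)} -> 'I_(sq T);
  senc : 'I_sm -> 'I_(sq T) -> {ffun 'I_sk -> 'I_(sq S)};
  sP_inj : forall (i j : 'I_sk) (v w : sV T), sP v i = sP w j -> i = j /\ v = w;
  sdec_enc : forall i t, sdec (senc i t) = t;
  senc_disj : forall i j, (exists t, senc i t = senc j t) -> i = j;
  ssim_card : forall (i : 'I_sm) (t : config T), ham t < Delta ->
      #|simset sP (senc i) Delta Gamma t| = deg;
  ssim_energy : forall (t : config T) (s : config S),
      (exists i, s \in simset sP (senc i) Delta Gamma t) -> ham s - Gamma = ham t;
  ssim_gap : forall s : config S,
      (forall (i : 'I_sm) (t : config T), s \notin simset sP (senc i) Delta Gamma t) ->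
      Delta <= ham s - Gamma
}.

From mathcomp Require Import all_boot all_order all_algebra.
Local Open Scope ring_scope.
Import Order.TTheory GRing.Theory Num.Theory.

(* A target configuration t of energy below the cut-off has d >= 1 simulating
   configurations, each of shifted energy H_T(t); conversely, a source
   configuration of shifted energy below the cut-off cannot escape every
   sim_i(t) by the energy gap, so it simulates some t and has energy H_T(t). *)

Section SimulationSpectrum.

Context {R : realFieldType} {S T : spin_system R} {f : simulation S T}.

Let sim (i : 'I_(sm f)) (t : config T) : {set config S} :=
  simset (sP f) (@senc _ _ _ f i) (Delta f) (Gamma f) t.

Lemma sim_nonempty (i : 'I_(sm f)) {t : config T} :
  ham t < Delta f -> exists s, s \in sim i t.
Proof.
move=> low_t; apply/card_gt0P.
by rewrite (ssim_card i low_t) (@deg_gt0 _ _ _ f).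
Qed.

Lemma ham_sim {i : 'I_(sm f)} {t : config T} {s : config S} :
  s \in sim i t -> ham s - Gamma f = ham t.
Proof. by move=> sim_s; apply: (@ssim_energy _ _ _ f); exists i. Qed.

Lemma low_energy_simulates {s : config S} :
  ham s - Gamma f < Delta f -> exists i t, s \in sim i t.
Proof.
move=> low_s.
have [/existsP [i /existsP [t sim_s]] | no_sim] :=
  boolP [exists i, exists t, s \in sim i t]; first by exists i, t.
suff : Delta f <= ham s - Gamma f by rewrite leNgt low_s.
apply: (@ssim_gap _ _ _ f) => j u; apply/negP => sim_su.
by move/negP: no_sim; apply; apply/existsP; exists j; apply/existsP; exists u.
Qed.

End SimulationSpectrum.

Theorem mainTheorem11 (R : realFieldType) (S T : spin_system R)
  (f : simulation S T) :
  Im_lt (@ham R T) (Delta f) =i Im_lt (fun s : config S => ham s - Gamma f) (Delta f).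
Proof.
move=> xi; rewrite /in_mem /= /Im_lt.
apply/andP/andP => -[/existsP [c /eqP <-] low_c]; split => //; apply/existsP.
- have [s sim_s] := sim_nonempty (Ordinal (@sm_gt0 _ _ _ f)) low_c.
  by exists s; rewrite (ham_sim sim_s).
- have [i [t sim_c]] := low_energy_simulates low_c.
  by exists t; rewrite (ham_sim sim_c).
Qed.
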